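(* Let $V$ be a complex normed vector space and $L\in l^{\infty}(V)^*$. The following are equivalent: (i) $L$ is a Banach limit functional; (ii) $|L(x)|\le p(x)$ for all $x\in l^{\infty}(V)$.
   Context: $\mathbb{N}=\{1,2,3,\dots\}$. $l^{\infty}(V)$ is the space of bounded sequences $x=\{x_n\}_{n=1}^\infty$ in $V$ with norm $\|x\|_\infty=\sup_n\|x_n\|_V$. $T$ is the left shift: $T\{x_1,x_2,x_3,\dots\}=\{x_2,x_3,\dots\}$. A Banach limit functional is a bounded linear functional $L$ on $l^\infty(V)$ such that $\|L\|\le 1$ and $L(Tx)=L(x)$ for all $x\in l^\infty(V)$. For $x\in l^\infty(V)$, $p(x):=\lim_{n\to\infty}\left(\sup_{j\in\mathbb{N}}\frac1n\left\|\sum_{i=0}^{n-1}x_{i+j}\right\|_V\right)$ (this limit exists). *)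

From Stdlib Require Import Reals Lra.
Open Scope R_scope.

Record Cplx : Type := mkC { Re : R ; Im : R }.
Definition C0 : Cplx := mkC 0 0.
Definition C1 : Cplx := mkC 1 0.
Definition Cadd (z w : Cplx) : Cplx := mkC (Re z + Re w) (Im z + Im w).
Definition Copp (z : Cplx) : Cplx := mkC (- Re z) (- Im z).
Definition Cmul (z w : Cplx) : Cplx :=
  mkC (Re z * Re w - Im z * Im w) (Re z * Im w + Im z * Re w).
Definition Cmod (z : Cplx) : R := sqrt (Re z ^ 2 + Im z ^ 2).

Record CNormedSpace : Type := {
  carrier :> Type ;
  vzero : carrier ;
  vadd : carrier -> carrier -> carrier ;
  vopp : carrier -> carrier ;
  vscal : Cplx -> carrier -> carrier ;
  vnorm : carrier -> R ;
  vadd_assoc : forall x y z, vadd x (vadd y z) = vadd (vadd x y) z ;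
  vadd_comm : forall x y, vadd x y = vadd y x ;
  vadd_0 : forall x, vadd x vzero = x ;
  vadd_opp : forall x, vadd x (vopp x) = vzero ;
  vscal_1 : forall x, vscal C1 x = x ;
  vscal_assoc : forall a b x, vscal a (vscal b x) = vscal (Cmul a b) x ;
  vscal_distr_v : forall a x y, vscal a (vadd x y) = vadd (vscal a x) (vscal a y) ;
  vscal_distr_s : forall a b x, vscal (Cadd a b) x = vadd (vscal a x) (vscal b x) ;
  vnorm_nonneg : forall x, 0 <= vnorm x ;
  vnorm_eq0 : forall x, vnorm x = 0 -> x = vzero ;
  vnorm_scal : forall a x, vnorm (vscal a x) = Cmod a * vnorm x ;
  vnorm_triangle : forall x y, vnorm (vadd x y) <= vnorm x + vnorm y
}.

Arguments vzero {c}.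
Arguments vadd {c} _ _.
Arguments vopp {c} _.
Arguments vscal {c} _ _.
Arguments vnorm {c} _.

Section Seqs.
Variable V : CNormedSpace.

(** Sequences x_1, x_2, ... are represented as [x : nat -> V] with x_{k+1} = x k. *)
Definition seqV := nat -> V.

Definition in_linf (x : seqV) : Prop := exists M, forall n, vnorm (x n) <= M.

Definition is_supnorm (x : seqV) (s : R) : Prop :=
  is_lub (fun r => exists n, r = vnorm (x n)) s.

Definition seq_add (x y : seqV) : seqV := fun n => vadd (x n) (y n).
Definition seq_scal (a : Cplx) (x : seqV) : seqV := fun n => vscal a (x n).

Definition shift (x : seqV) : seqV := fun n => x (S n).

(** L is an element of l^infty(V)^* (a in_linf Cplx-linear functional on l^infty(V));
    L is given as a function on all sequences, only its values on l^infty(V) matter. *)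
Definition is_dual_elem (L : seqV -> Cplx) : Prop :=
  (forall x y, in_linf x -> in_linf y -> L (seq_add x y) = Cadd (L x) (L y)) /\
  (forall a x, in_linf x -> L (seq_scal a x) = Cmul a (L x)) /\
  (exists K, forall x s, in_linf x -> is_supnorm x s -> Cmod (L x) <= K * s).

Definition opnorm_le1 (L : seqV -> Cplx) : Prop :=
  forall x s, in_linf x -> is_supnorm x s -> Cmod (L x) <= s.

Definition banach_limit (L : seqV -> Cplx) : Prop :=
  is_dual_elem L /\ opnorm_le1 L /\
  (forall x, in_linf x -> L (shift x) = L x).

Fixpoint vsum (f : nat -> V) (n : nat) : V :=
  match n with
  | O => vzero
  | S k => vadd (vsum f k) (f k)
  end.

Definition is_avg_sup (x : seqV) (n : nat) (a : R) : Prop :=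
  is_lub (fun r => exists j, r = / INR n * vnorm (vsum (fun i => x (i + j)%nat) n)) a.

Definition is_p (x : seqV) (l : R) : Prop :=
  exists a : nat -> R,
    (forall n, (1 <= n)%nat -> is_avg_sup x n (a n)) /\ Un_cv a l.

End Seqs.

Arguments in_linf {V} _.
Arguments is_supnorm {V} _ _.
Arguments shift {V} _ _.
Arguments is_dual_elem {V} _.
Arguments opnorm_le1 {V} _.
Arguments banach_limit {V} _.
Arguments is_p {V} _ _.

From Pilot Require Import Defs.
From Stdlib Require Import Reals Lra Lia Classical IndefiniteDescription
  FunctionalExtensionality.
Open Scope R_scope.

(** Write [window x n j = x_j + ... + x_(j+n-1)] and
    [a_n = sup_j ||window x n j|| / n], so that p(x) = lim a_n.

    (i) => (ii): by shift invariance and linearity, L maps the averaged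
    sequence [j |-> window x n j / n] to L x; its sup norm is a_n, so
    |L x| <= a_n for every n >= 1 and hence |L x| <= p(x).

    (ii) => (i): the triangle inequality makes [n * a_n] subadditive, and
    Fekete's lemma (proved here for bounded sequences) shows that a_n
    converges to some p(x) <= a_1 <= ||x||_oo; this gives ||L|| <= 1.
    For shift invariance, the windows of [Tx - x] telescope to
    [x_(n+j) - x_j], whose norm is at most 2 ||x||_oo; so p(Tx - x) = 0,
    forcing L(Tx - x) = 0. *)

Lemma is_lub_ext (E F : R -> Prop) (s : R) :
  (forall r, E r <-> F r) -> is_lub E s -> is_lub F s.
Proof.
  intros H [Hub Hleast]; split.
  - intros r Hr; apply Hub, H, Hr.
  - intros b Hb; apply Hleast; intros r Hr; apply Hb, H, Hr.
Qed.

Lemma Ceq (z w : Cplx) : Re z = Re w -> Im z = Im w -> z = w.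
Proof. destruct z, w; simpl; intros; subst; reflexivity. Qed.

Lemma Cmod_nonneg (z : Cplx) : 0 <= Cmod z.
Proof. apply sqrt_pos. Qed.

Lemma Cmod_real (r : R) : 0 <= r -> Cmod (mkC r 0) = r.
Proof.
  intro Hr; unfold Cmod; cbn [Re Im].
  replace (r ^ 2 + 0 ^ 2) with (r ^ 2) by ring.
  now apply sqrt_pow2.
Qed.

Lemma Cmod_eq0 (z : Cplx) : Cmod z = 0 -> z = Defs.C0.
Proof.
  unfold Cmod; intro H; apply sqrt_eq_0 in H; [|nra].
  apply Ceq; simpl; nra.
Qed.

Definition Cminus1 : Cplx := mkC (-1) 0.

Lemma Cmod_minus1 : Cmod Cminus1 = 1.
Proof.
  unfold Cmod, Cminus1; cbn [Re Im].
  replace ((-1) ^ 2 + 0 ^ 2) with (1 ^ 2) by ring.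
  apply sqrt_pow2; lra.
Qed.

Section NormedSpace.
Variable V : CNormedSpace.

Lemma vscal_C0 (v : V) : vscal Defs.C0 v = vzero.
Proof. apply vnorm_eq0; rewrite vnorm_scal; unfold Defs.C0; rewrite Cmod_real; lra. Qed.

Lemma vnorm_zero : vnorm (@vzero V) = 0.
Proof. rewrite <- (vscal_C0 vzero), vnorm_scal; unfold Defs.C0; rewrite Cmod_real; lra. Qed.

Lemma vadd_minus1 (v : V) : vadd v (vscal Cminus1 v) = vzero.
Proof.
  rewrite <- (vscal_1 V v) at 1; rewrite <- vscal_distr_s.
  replace (Cadd Defs.C1 Cminus1) with Defs.C0; [apply vscal_C0|].
  apply Ceq; unfold Defs.C0, Defs.C1, Cminus1; simpl; ring.
Qed.

Lemma vadd_swap (a b c e : V) :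
  vadd (vadd a b) (vadd c e) = vadd (vadd a e) (vadd c b).
Proof.
  rewrite <- !vadd_assoc; f_equal.
  rewrite (vadd_comm V c e), (vadd_comm V b (vadd e c)), <- vadd_assoc.
  reflexivity.
Qed.

Lemma vsum_ext (f g : nat -> V) (n : nat) :
  (forall i, f i = g i) -> vsum V f n = vsum V g n.
Proof. intro H; induction n; simpl; auto; now rewrite IHn, H. Qed.

Lemma vsum_split (f : nat -> V) (m n : nat) :
  vsum V f (m + n) = vadd (vsum V f m) (vsum V (fun i => f (m + i)%nat) n).
Proof.
  induction n; simpl.
  - now rewrite Nat.add_0_r, vadd_0.
  - rewrite Nat.add_succ_r; simpl; now rewrite IHn, vadd_assoc.
Qed.

Lemma vsum_bound (f : nat -> V) (M : R) (n : nat) :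
  (forall i, vnorm (f i) <= M) -> vnorm (vsum V f n) <= INR n * M.
Proof.
  intro H; induction n; cbn [vsum].
  - rewrite vnorm_zero; simpl; lra.
  - eapply Rle_trans; [apply vnorm_triangle|]; rewrite S_INR.
    specialize (H n); lra.
Qed.

Lemma in_linf_add (x y : seqV V) : in_linf x -> in_linf y -> in_linf (seq_add V x y).
Proof.
  intros [M1 H1] [M2 H2]; exists (M1 + M2); intro n; unfold seq_add.
  eapply Rle_trans; [apply vnorm_triangle|].
  specialize (H1 n); specialize (H2 n); lra.
Qed.

Lemma in_linf_scal (a : Cplx) (x : seqV V) : in_linf x -> in_linf (seq_scal V a x).
Proof.
  intros [M H]; exists (Cmod a * M); intro n; unfold seq_scal.
  rewrite vnorm_scal; apply Rmult_le_compat_l; auto; apply Cmod_nonneg.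
Qed.

Lemma in_linf_shift (x : seqV V) : in_linf x -> in_linf (shift x).
Proof. intros [M H]; exists M; intro n; apply H. Qed.

Lemma in_linf_zero : in_linf (fun _ : nat => @vzero V).
Proof. exists 0; intro; rewrite vnorm_zero; lra. Qed.

Lemma in_linf_nonneg_bound (x : seqV V) :
  in_linf x -> exists M, 0 <= M /\ forall n, vnorm (x n) <= M.
Proof.
  intros [M H]; exists (Rmax M 0); split; [apply Rmax_r|].
  intro n; eapply Rle_trans; [apply H|apply Rmax_l].
Qed.

(** * Windows and their averaged suprema *)

Definition window (x : seqV V) (n j : nat) : V := vsum V (fun i => x (i + j)%nat) n.

Lemma avg_sup_exists (x : seqV V) :
  in_linf x -> exists a : nat -> R, forall n, (1 <= n)%nat -> is_avg_sup V x n (a n).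
Proof.
  intro Hx; apply (functional_choice (fun n a => (1 <= n)%nat -> is_avg_sup V x n a)).
  intro n; destruct n as [|n']; [exists 0; lia|].
  destruct (in_linf_nonneg_bound x Hx) as [M [_ HM]].
  set (n := S n').
  assert (Hn : 0 < INR n) by (apply lt_0_INR; unfold n; lia).
  destruct (completeness (fun r => exists j, r = / INR n * vnorm (window x n j)))
    as [a Ha].
  - exists (/ INR n * (INR n * M)); intros r [j ->].
    apply Rmult_le_compat_l; [left; now apply Rinv_0_lt_compat|].
    now apply vsum_bound.
  - now exists (/ INR n * vnorm (window x n 0)), 0%nat.
  - now exists a.
Qed.

Section AvgSup.
Variables (x : seqV V) (n : nat) (a : R).
Hypotheses (Hn : (1 <= n)%nat) (Ha : is_avg_sup V x n a).

Let INR_n_pos : 0 < INR n.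
Proof. apply lt_0_INR; lia. Qed.

Lemma avg_sup_window_le (j : nat) : vnorm (window x n j) <= INR n * a.
Proof.
  destruct Ha as [Hub _].
  assert (H := Hub _ (ex_intro _ j eq_refl)).
  apply Rmult_le_compat_l with (r := INR n) in H; [|lra].
  rewrite <- Rmult_assoc, Rinv_r, Rmult_1_l in H; [exact H|lra].
Qed.

Lemma avg_sup_le (c : R) : (forall j, vnorm (window x n j) <= c) -> INR n * a <= c.
Proof.
  destruct Ha as [_ Hleast]; intro Hc.
  assert (H : a <= / INR n * c).
  { apply Hleast; intros r [j ->]; apply Rmult_le_compat_l; [|apply Hc].
    left; now apply Rinv_0_lt_compat. }
  apply Rmult_le_compat_l with (r := INR n) in H; [|lra].
  rewrite <- Rmult_assoc, Rinv_r, Rmult_1_l in H; [exact H|lra].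
Qed.

Lemma avg_sup_nonneg : 0 <= a.
Proof.
  assert (H := avg_sup_window_le 0); assert (H0 := vnorm_nonneg V (window x n 0)).
  nra.
Qed.

Lemma avg_sup_le_bound (s : R) : (forall k, vnorm (x k) <= s) -> a <= s.
Proof.
  intro Hs; assert (H : INR n * a <= INR n * s).
  { apply avg_sup_le; intro j; now apply vsum_bound. }
  nra.
Qed.

End AvgSup.

Lemma avg_sup_subadditive (x : seqV V) (a : nat -> R) :
  (forall n, (1 <= n)%nat -> is_avg_sup V x n (a n)) ->
  forall m n, (1 <= m)%nat -> (1 <= n)%nat ->
  INR (m + n) * a (m + n)%nat <= INR m * a m + INR n * a n.
Proof.
  intros Ha m n Hm Hn.
  apply (avg_sup_le x); [lia|apply Ha; lia|]; intro j; unfold window.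
  rewrite vsum_split; eapply Rle_trans; [apply vnorm_triangle|].
  apply Rplus_le_compat; [apply (avg_sup_window_le x m); auto|].
  rewrite (vsum_ext _ (fun i => x (i + (m + j))%nat)) by (intro; f_equal; lia).
  apply (avg_sup_window_le x n); auto.
Qed.

Lemma window_shift_diff (x : seqV V) (n j : nat) :
  window (seq_add V (shift x) (seq_scal V Cminus1 x)) n j =
  vadd (x (n + j)%nat) (vscal Cminus1 (x j)).
Proof.
  unfold window; induction n; cbn [vsum].
  - symmetry; apply vadd_minus1.
  - rewrite IHn; unfold seq_add, seq_scal, shift.
    now rewrite vadd_swap, vadd_minus1, vadd_comm, vadd_0.
Qed.

End NormedSpace.

(** * Fekete's lemma for bounded sequences *)

Lemma inf_exists (a : nat -> R) :
  (forall n, (1 <= n)%nat -> 0 <= a n) ->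
  exists l, (forall n, (1 <= n)%nat -> l <= a n) /\
            (forall eps, 0 < eps -> exists m, (1 <= m)%nat /\ a m < l + eps).
Proof.
  intro Ha.
  destruct (completeness (fun r => exists n, (1 <= n)%nat /\ r = - a n)) as [g [Hub Hleast]].
  - exists 0; intros r [n [Hn ->]]; specialize (Ha n Hn); lra.
  - now exists (- a 1%nat), 1%nat.
  - exists (- g); split.
    + intros n Hn; assert (- a n <= g) by (apply Hub; now exists n); lra.
    + intros eps Heps; apply NNPP; intro Hno.
      assert (g <= g - eps); [|lra].
      apply Hleast; intros r [n [Hn ->]].
      destruct (Rlt_or_le (a n) (- g + eps)); [|lra].
      exfalso; apply Hno; now exists n.
Qed.

(** If [n a_n] is subadditive and [0 <= a_n <= s], then
    [n a_n <= n a_m + m s]: divide [n] by [m] with remainder. *)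
Lemma subadditive_division_bound (a : nat -> R) (s : R) :
  (forall n, (1 <= n)%nat -> 0 <= a n <= s) ->
  (forall m n, (1 <= m)%nat -> (1 <= n)%nat ->
     INR (m + n) * a (m + n)%nat <= INR m * a m + INR n * a n) ->
  forall m n, (1 <= m)%nat -> (1 <= n)%nat ->
  INR n * a n <= INR n * a m + INR m * s.
Proof.
  intros Hbd Hsub m n Hm Hn.
  assert (Hsub0 : forall p q, INR (p + q) * a (p + q)%nat <= INR p * a p + INR q * a q).
  { intros [|p] [|q].
    - simpl; lra.
    - rewrite Nat.add_0_l; simpl INR; lra.
    - rewrite Nat.add_0_r; simpl INR at 3; lra.
    - apply Hsub; lia. }
  assert (Hmult : forall q r, INR (q * m + r) * a (q * m + r)%nat <=
                              INR q * (INR m * a m) + INR r * a r).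
  { intros q r; induction q; [simpl; lra|].
    replace (S q * m + r)%nat with (m + (q * m + r))%nat by lia.
    eapply Rle_trans; [apply Hsub0|]; rewrite S_INR; lra. }
  set (q := (n / m)%nat); set (r := (n mod m)%nat).
  assert (Hdiv : n = (q * m + r)%nat) by (unfold q, r; rewrite Nat.mul_comm; apply Nat.div_mod; lia).
  assert (Hrm : INR r <= INR m) by (apply le_INR, Nat.lt_le_incl, Nat.mod_upper_bound; lia).
  assert (Har : INR r * a r <= INR r * s).
  { destruct r as [|r']; [simpl; lra|].
    apply Rmult_le_compat_l; [apply pos_INR|apply Hbd; lia]. }
  assert (HnE : INR n = INR q * INR m + INR r) by (rewrite Hdiv, plus_INR, mult_INR; auto).
  assert (Hq := Hmult q r); rewrite <- Hdiv in Hq.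
  assert (0 <= INR q) by apply pos_INR; assert (0 <= INR r) by apply pos_INR.
  destruct (Hbd m Hm); nra.
Qed.

Lemma fekete (a : nat -> R) (s : R) :
  (forall n, (1 <= n)%nat -> 0 <= a n <= s) ->
  (forall m n, (1 <= m)%nat -> (1 <= n)%nat ->
     INR (m + n) * a (m + n)%nat <= INR m * a m + INR n * a n) ->
  exists l, Un_cv a l /\ l <= a 1%nat.
Proof.
  intros Hbd Hsub.
  destruct (inf_exists a) as [l [Hlow Hclose]]; [intros n Hn; apply Hbd, Hn|].
  exists l; split; [|apply Hlow; lia].
  intros eps Heps.
  destruct (Hclose (eps / 2)) as [m [Hm Ham]]; [lra|].
  destruct (INR_unbounded (2 * INR m * s / eps)) as [N HN].
  exists (max N 1); intros n Hn.
  assert (Hnpos : 0 < INR n) by (apply lt_0_INR; lia).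
  assert (HNn : INR N <= INR n) by (apply le_INR; lia).
  assert (Hlarge : 2 * INR m * s < INR n * eps).
  { apply Rmult_gt_compat_r with (r := eps) in HN; auto.
    unfold Rdiv in HN; rewrite Rmult_assoc, Rinv_l, Rmult_1_r in HN; nra. }
  assert (Hdiv := subadditive_division_bound a s Hbd Hsub m n Hm ltac:(lia)).
  assert (Han : INR n * a n < INR n * (l + eps)) by nra.
  apply Rmult_lt_reg_l in Han; auto.
  specialize (Hlow n ltac:(lia)).
  unfold R_dist; apply Rabs_def1; lra.
Qed.

Lemma Un_cv_ge_lower_bound (a : nat -> R) (l c : R) :
  (forall n, (1 <= n)%nat -> c <= a n) -> Un_cv a l -> c <= l.
Proof.
  intros H Hcv; destruct (Rle_or_lt c l) as [|Hlt]; auto.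
  destruct (Hcv (c - l)) as [N HN]; [lra|].
  specialize (HN (max N 1) (Nat.le_max_l _ _)).
  specialize (H (max N 1) (Nat.le_max_r _ _)).
  unfold R_dist in HN; apply Rabs_def2 in HN; lra.
Qed.

(** * The seminorm p *)

Section Seminorm.
Variable V : CNormedSpace.

Lemma is_p_exists_le_supnorm (x : seqV V) (s : R) :
  in_linf x -> (forall k, vnorm (x k) <= s) -> exists l, is_p x l /\ l <= s.
Proof.
  intros Hx Hs.
  destruct (avg_sup_exists V x Hx) as [a Ha].
  assert (Hbd : forall n, (1 <= n)%nat -> 0 <= a n <= s).
  { intros n Hn; split; [eapply avg_sup_nonneg|eapply avg_sup_le_bound]; eauto. }
  destruct (fekete a s Hbd (avg_sup_subadditive V x a Ha)) as [l [Hl Hl1]].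
  exists l; split; [now exists a|].
  specialize (Hbd 1%nat (le_n 1)); lra.
Qed.

Lemma is_p_zero_of_bounded_windows (x : seqV V) (C : R) :
  in_linf x -> (forall n j, vnorm (window V x n j) <= C) -> is_p x 0.
Proof.
  intros Hx HC.
  destruct (avg_sup_exists V x Hx) as [a Ha]; exists a; split; auto.
  intros eps Heps.
  destruct (INR_unbounded (C / eps)) as [N HN].
  exists (max N 1); intros n Hn.
  assert (Hnpos : 0 < INR n) by (apply lt_0_INR; lia).
  assert (HNn : INR N <= INR n) by (apply le_INR; lia).
  assert (Ha0 : 0 <= a n) by (eapply avg_sup_nonneg; [|apply Ha]; lia).
  assert (HaC : INR n * a n <= C) by (eapply avg_sup_le; [|apply Ha|]; auto; lia).
  assert (Hlarge : C < INR n * eps).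
  { apply Rmult_gt_compat_r with (r := eps) in HN; auto.
    unfold Rdiv in HN; rewrite Rmult_assoc, Rinv_l, Rmult_1_r in HN; nra. }
  assert (Hlt : INR n * a n < INR n * eps) by lra.
  apply Rmult_lt_reg_l in Hlt; auto.
  unfold R_dist; rewrite Rminus_0_r, Rabs_right; lra.
Qed.

(** p(Tx - x) = 0: the windows telescope to [x_(n+j) - x_j]. *)
Lemma is_p_shift_diff (x : seqV V) :
  in_linf x -> is_p (seq_add V (shift x) (seq_scal V Cminus1 x)) 0.
Proof.
  intro Hx; destruct (in_linf_nonneg_bound V x Hx) as [M [_ HM]].
  apply (is_p_zero_of_bounded_windows _ (2 * M)).
  - apply in_linf_add; [apply in_linf_shift|apply in_linf_scal]; auto.
  - intros n j; rewrite window_shift_diff.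
    eapply Rle_trans; [apply vnorm_triangle|].
    rewrite vnorm_scal, Cmod_minus1.
    generalize (HM (n + j)%nat) (HM j); lra.
Qed.

End Seminorm.

Section Functional.
Variables (V : CNormedSpace) (L : seqV V -> Cplx).
Hypothesis HL : is_dual_elem L.

Lemma L_zero : L (fun _ => vzero) = Defs.C0.
Proof.
  destruct HL as [_ [Hscal _]].
  replace (fun _ : nat => @vzero V) with (seq_scal V Defs.C0 (fun _ => vzero))
    by (apply functional_extensionality; intro; apply vscal_C0).
  rewrite Hscal by apply in_linf_zero.
  apply Ceq; unfold Defs.C0; simpl; ring.
Qed.

Hypothesis Hshift : forall y, in_linf y -> L (shift y) = L y.

Lemma L_tail (x : seqV V) (k : nat) :
  in_linf x -> in_linf (fun j => x (k + j)%nat) /\ L (fun j => x (k + j)%nat) = L x.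
Proof.
  intro Hx; induction k as [|k [Hin Heq]]; [split; auto|].
  replace (fun j => x (S k + j)%nat) with (shift (fun j => x (k + j)%nat))
    by (apply functional_extensionality; intro j; unfold shift; f_equal; lia).
  split; [now apply in_linf_shift|]; now rewrite Hshift.
Qed.

Lemma L_window (x : seqV V) (n : nat) :
  in_linf x ->
  in_linf (window V x n) /\ L (window V x n) = Cmul (mkC (INR n) 0) (L x).
Proof.
  intro Hx; induction n as [|n [Hin Heq]].
  - split; [apply in_linf_zero|].
    unfold window; cbn [vsum]; rewrite L_zero; apply Ceq; unfold Defs.C0; simpl; ring.
  - destruct (L_tail x n Hx) as [Hin' Heq'].
    replace (window V x (S n)) with (seq_add V (window V x n) (fun j => x (n + j)%nat))
      by reflexivity.
    split; [now apply in_linf_add|].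
    destruct HL as [Hadd _]; rewrite Hadd, Heq, Heq' by auto.
    apply Ceq; rewrite S_INR; simpl; ring.
Qed.

Hypothesis Hnorm : opnorm_le1 L.

(** |L x| <= a_n for every n >= 1: apply ||L|| <= 1 to the averaged windows. *)
Lemma L_le_avg_sup (x : seqV V) (n : nat) (a : R) :
  in_linf x -> (1 <= n)%nat -> is_avg_sup V x n a -> Cmod (L x) <= a.
Proof.
  intros Hx Hn Ha.
  destruct (L_window x n Hx) as [Hin Hwin].
  assert (Hnpos : 0 < INR n) by (apply lt_0_INR; lia).
  set (avg := seq_scal V (mkC (/ INR n) 0) (window V x n)).
  assert (Havg : L avg = L x).
  { destruct HL as [_ [Hscal _]]; unfold avg; rewrite Hscal, Hwin by auto.
    apply Ceq; simpl; field; lra. }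
  rewrite <- Havg; apply Hnorm; [now apply in_linf_scal|].
  revert Ha; apply is_lub_ext; intro r; split; intros [j ->]; exists j;
    unfold avg, seq_scal; rewrite vnorm_scal, Cmod_real; auto;
    left; now apply Rinv_0_lt_compat.
Qed.

End Functional.

Lemma banach_limit_dominated (V : CNormedSpace) (L : seqV V -> Cplx) :
  banach_limit L -> forall x, in_linf x -> forall l, is_p x l -> Cmod (L x) <= l.
Proof.
  intros [HL [Hnorm Hshift]] x Hx l [a [Ha Hcv]].
  apply (Un_cv_ge_lower_bound a); auto; intros n Hn.
  apply (L_le_avg_sup V L HL Hshift Hnorm x n); auto.
Qed.

Section Dominated.
Variables (V : CNormedSpace) (L : seqV V -> Cplx).
Hypotheses (HL : is_dual_elem L)
  (Hdom : forall x, in_linf x -> forall l, is_p x l -> Cmod (L x) <= l).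

(** (ii) => ||L|| <= 1, since p(x) <= ||x||_oo. *)
Lemma dominated_opnorm_le1 : opnorm_le1 L.
Proof.
  intros x s Hx [Hub _].
  assert (Hs : forall k, vnorm (x k) <= s) by (intro k; apply Hub; now exists k).
  destruct (is_p_exists_le_supnorm V x s Hx Hs) as [l [Hl Hls]].
  specialize (Hdom x Hx l Hl); lra.
Qed.

(** (ii) => shift invariance, since p(Tx - x) = 0. *)
Lemma dominated_shift_invariant : forall x, in_linf x -> L (shift x) = L x.
Proof.
  intros x Hx.
  set (d := seq_add V (shift x) (seq_scal V Cminus1 x)).
  assert (Hd : in_linf d)
    by (apply in_linf_add; [apply in_linf_shift|apply in_linf_scal]; auto).
  assert (HLd : L d = Defs.C0).
  { apply Cmod_eq0, Rle_antisym; [|apply Cmod_nonneg].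
    now apply Hdom, is_p_shift_diff. }
  destruct HL as [Hadd [Hscal _]].
  unfold d in HLd; rewrite Hadd, Hscal in HLd by auto using in_linf_shift, in_linf_scal.
  unfold Cadd, Cmul, Cminus1, Defs.C0 in HLd; injection HLd; intros Him Hre.
  apply Ceq; simpl in *; lra.
Qed.

End Dominated.

Theorem mainTheorem8 (V : CNormedSpace) (L : seqV V -> Cplx) :
  is_dual_elem L ->
  (banach_limit L <->
   (forall x : seqV V, in_linf x -> forall l : R, is_p x l -> Cmod (L x) <= l)).
Proof.
  intro HL; split.
  - apply banach_limit_dominated.
  - intro Hdom; split; [exact HL|split].
    + exact (dominated_opnorm_le1 V L Hdom).
    + exact (dominated_shift_invariant V L HL Hdom).
Qed.
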